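(* Let $A$ be an artinian local ring with infinite residue field, $S$ a finitely generated standard $\mathbb N^d$-graded algebra over $A$, and let $0\to M'\to M\to M''\to0$ be an exact sequence of finitely generated $\mathbb N^d$-graded $S$-modules. Let $\mathbf x$ be a sequence of elements in $\bigcup_{i=1}^dS_i$. Then $\mathbf x$ is a mixed multiplicity system of $M$ if and only if $\mathbf x$ is a mixed multiplicity system of both $M'$ and $M''$.
   Context: $S$ standard: $S_{\mathbf 0}=A$, generated by $S_i:=S_{\mathbf e_i}$. $S_{++}=\bigoplus_{\mathbf n\ge\mathbf 1}S_{\mathbf n}$; for a graded module $F$, $\mathrm{Supp}_{++}F$ is the set of homogeneous primes $P$ of $S$ not containing $S_{++}$ with $F_P\ne0$ (dimension $-\infty$ if empty). A sequence $\mathbf x$ of elements of $\bigcup_jS_j$ is a mixed multiplicity system of $F$ if $\dim\mathrm{Supp}_{++}(F/\mathbf xF)\le0$ (with $\mathbf xF=0$ for empty $\mathbf x$). *)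

From HB Require Import structures.
From mathcomp Require Import all_boot all_order all_algebra.
Set Implicit Arguments. Unset Strict Implicit. Unset Printing Implicit Defensive.
Import Order.TTheory GRing.Theory Num.Theory.
Local Open Scope ring_scope.

Definition ndeg (d : nat) := {ffun 'I_d -> nat}.
Definition ndeg0 (d : nat) : ndeg d := [ffun=> 0%N].
Definition ndegD (d : nat) (m n : ndeg d) : ndeg d := [ffun i => (m i + n i)%N].
Definition ndege (d : nat) (i : 'I_d) : ndeg d := [ffun j => nat_of_bool (j == i)].

Definition is_ideal (R : comNzRingType) (I : {pred R}) : Prop :=
  [/\ 0 \in I,
      (forall a b, a \in I -> b \in I -> a + b \in I) &
      (forall r a, a \in I -> r * a \in I)].

Definition is_proper_ideal (R : comNzRingType) (I : {pred R}) : Prop :=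
  is_ideal I /\ 1 \notin I.

Definition is_maximal_ideal (R : comNzRingType) (I : {pred R}) : Prop :=
  is_proper_ideal I /\
  forall J : {pred R}, is_ideal J -> {subset I <= J} -> J =i I \/ 1 \in J.

Definition is_prime_ideal (R : comNzRingType) (I : {pred R}) : Prop :=
  is_proper_ideal I /\ forall a b, a * b \in I -> a \in I \/ b \in I.

Definition artinian (R : comNzRingType) : Prop :=
  forall I : nat -> {pred R}, (forall n, is_ideal (I n)) ->
    (forall n, {subset I n.+1 <= I n}) ->
    exists N, forall n, (N <= n)%N -> I n =i I N.

(* Local ring (unique maximal ideal m) whose residue field R/m is infinite
   (there are infinitely many pairwise distinct classes modulo m). *)
Definition local_infinite_residue (R : comNzRingType) : Prop :=
  exists m : {pred R},
    [/\ is_maximal_ideal m,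
        (forall m' : {pred R}, is_maximal_ideal m' -> m' =i m) &
        exists f : nat -> R, forall i j, i != j -> f i - f j \notin m].

Definition graded_decomp (d : nat) (V : zmodType) (G : ndeg d -> {pred V}) : Prop :=
  [/\ (forall n, 0 \in G n),
      (forall n a b, a \in G n -> b \in G n -> a - b \in G n),
      (forall v, exists (ns : seq (ndeg d)) (c : ndeg d -> V),
          uniq ns /\ (forall n, c n \in G n) /\ v = \sum_(n <- ns) c n) &
      (forall (ns : seq (ndeg d)) (c : ndeg d -> V), uniq ns ->
          (forall n, c n \in G n) -> \sum_(n <- ns) c n = 0 ->
          forall n, n \in ns -> c n = 0)].

Definition in_subalg_gen (A : comNzRingType) (S : comAlgType A)
  (gen : S -> Prop) (s : S) : Prop :=
  forall P : S -> Prop,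
    (forall a : A, P (a%:A)) -> (forall g, gen g -> P g) ->
    (forall u v, P u -> P v -> P (u + v)) ->
    (forall u v, P u -> P v -> P (u * v)) -> P s.

Definition fg_standard_graded_algebra (A : comNzRingType) (S : comAlgType A)
  (d : nat) (Sg : ndeg d -> {pred S}) : Prop :=
  [/\ graded_decomp Sg,
      1 \in Sg (ndeg0 d),
      (forall m n a b, a \in Sg m -> b \in Sg n -> a * b \in Sg (ndegD m n)),
      ((forall s, s \in Sg (ndeg0 d) <-> exists a : A, s = a%:A) /\
       injective (fun a : A => (a%:A : S))) &
      exists gens : seq S,
        (forall g, g \in gens -> exists i, g \in Sg (ndege i)) /\
        (forall s, in_subalg_gen (fun g => g \in gens) s)].

Definition fg_graded_module (A : comNzRingType) (S : comAlgType A)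
  (d : nat) (Sg : ndeg d -> {pred S}) (M : lmodType S)
  (Mg : ndeg d -> {pred M}) : Prop :=
  [/\ graded_decomp Mg,
      (forall m n (s : S) (v : M), s \in Sg m -> v \in Mg n ->
          s *: v \in Mg (ndegD m n)) &
      exists gens : seq M, forall v : M,
        exists c : M -> S, v = \sum_(g <- gens) c g *: g].

Definition graded_map (d : nat) (S : nzRingType) (M N : lmodType S)
  (Mg : ndeg d -> {pred M}) (Ng : ndeg d -> {pred N}) (f : M -> N) : Prop :=
  forall n v, v \in Mg n -> f v \in Ng n.

Definition homogeneous_prime (A : comNzRingType) (S : comAlgType A)
  (d : nat) (Sg : ndeg d -> {pred S}) (P : {pred S}) : Prop :=
  is_prime_ideal P /\
  forall s, s \in P -> exists (ns : seq (ndeg d)) (c : ndeg d -> S),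
    (forall n, c n \in Sg n /\ c n \in P) /\ s = \sum_(n <- ns) c n.

Definition not_contain_Spp (A : comNzRingType) (S : comAlgType A)
  (d : nat) (Sg : ndeg d -> {pred S}) (P : {pred S}) : Prop :=
  exists (n : ndeg d) (s : S), (forall i, (1 <= n i)%N) /\ s \in Sg n /\ s \notin P.

Definition in_xF (S : nzRingType) (F : lmodType S) (x : seq S) (v : F) : Prop :=
  exists m : 'I_(size x) -> F, v = \sum_(i < size x) x`_i *: m i.

(* (F/xF)_P <> 0, unfolded: some class m + xF has nonzero image m/1 in the
   localization, i.e. s m \notin xF for every s \notin P. *)
Definition loc_quot_nonzero (S : nzRingType) (F : lmodType S) (x : seq S)
  (P : {pred S}) : Prop :=
  exists m : F, forall s : S, s \notin P -> ~ in_xF x (s *: m).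

Definition supp_pp (A : comNzRingType) (S : comAlgType A)
  (d : nat) (Sg : ndeg d -> {pred S}) (F : lmodType S) (x : seq S)
  (P : {pred S}) : Prop :=
  [/\ homogeneous_prime Sg P, not_contain_Spp Sg P & loc_quot_nonzero F x P].

(* dim X <= k for a set X of prime ideals (dimension = supremum of lengths
   of strict chains of primes in X, -oo if X is empty): there is no strict
   chain P_0 < P_1 < ... < P_(k+1) in X. *)
Definition dim_le (S : nzRingType) (X : {pred S} -> Prop) (k : nat) : Prop :=
  forall c : nat -> {pred S},
    (forall i, (i <= k.+1)%N -> X (c i)) ->
    (forall i, (i <= k)%N ->
       {subset c i <= c i.+1} /\ exists s, s \in c i.+1 /\ s \notin c i) ->
    False.

Definition mm_system (A : comNzRingType) (S : comAlgType A)
  (d : nat) (Sg : ndeg d -> {pred S}) (F : lmodType S) (x : seq S) : Prop :=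
  dim_le (supp_pp Sg F x) 0.

From Stdlib Require Import Classical IndefiniteDescription.
From HB Require Import structures.
From mathcomp Require Import all_boot all_order all_algebra.
Set Implicit Arguments. Unset Strict Implicit. Unset Printing Implicit Defensive.
Import GRing.Theory.
Local Open Scope ring_scope.

(* Supp_++(M/xM) is the union of Supp_++(M'/xM') and Supp_++(M''/xM''), and
   each of these supports is closed upwards among homogeneous primes.  Hence a
   strict chain of primes in Supp_++(M/xM) starting in one of the two smaller
   supports lies entirely in it, and the dimension bound passes both ways.
   The only nontrivial inclusion is Supp(M'/xM') <= Supp(M/xM): if
   (M'/xM')_P <> 0 then x <= P, so (M/xM)_P = 0 would give M_P = x M_P <= P M_P,
   hence M_P = 0 by Nakayama, and then M'_P = 0 as well. *)

Section PrimeIdeal.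

Variables (R : comNzRingType) (P : {pred R}).
Hypothesis primeP : is_prime_ideal P.

Lemma prime_ideal0 : 0 \in P.
Proof. by case: primeP => [[[]]]. Qed.

Lemma prime_ideal1 : 1 \notin P.
Proof. by case: primeP => [[]]. Qed.

Lemma prime_idealD a b : a \in P -> b \in P -> a + b \in P.
Proof. by case: primeP => [[[_ addP _]]] _ _; apply: addP. Qed.

Lemma prime_idealMl r a : a \in P -> r * a \in P.
Proof. by case: primeP => [[[_ _ mulP]]] _ _; apply: mulP. Qed.

Lemma prime_idealMn a b : a \notin P -> b \notin P -> a * b \notin P.
Proof. by move=> /negP aP /negP bP; apply/negP; case: primeP => _ /[apply] -[]. Qed.

Lemma prime_ideal_sum (I : Type) (r : seq I) (F : I -> R) :
  (forall i, F i \in P) -> \sum_(i <- r) F i \in P.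
Proof.
move=> FP; elim: r => [|i r IH]; rewrite ?big_nil ?big_cons.
  exact: prime_ideal0.
exact: prime_idealD.
Qed.

Lemma prime_idealBl s a : s \notin P -> a \in P -> s - a \notin P.
Proof.
move=> /negP sP aP; apply/negP => saP; apply: sP.
by rewrite -(subrK a s); apply: prime_idealD.
Qed.

End PrimeIdeal.

(* Nakayama over R_P, by eliminating the first generator: (s - a g) g lies in
   the span of the others and s - a g \notin P. *)
Lemma nakayama_prime_localization (R : comNzRingType) (V : lmodType R)
    (P : {pred R}) (gs : seq V) :
  is_prime_ideal P ->
  (forall g, g \in gs -> exists2 s, s \notin P & exists2 a : V -> R,
     (forall h, a h \in P) & s *: g = \sum_(h <- gs) a h *: h) ->
  exists2 t, t \notin P & forall g, g \in gs -> t *: g = 0.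
Proof.
move=> primeP; elim: gs => [|g gs IH] gsP.
  by exists 1 => //; apply: prime_ideal1.
have [s sP [a aP]] := gsP g (mem_head _ _); rewrite big_cons => sg.
set u := s - a g.
have uP : u \notin P by apply: prime_idealBl.
have ug : u *: g = \sum_(h <- gs) a h *: h by rewrite /u scalerBl sg addrC addKr.
have [t tP tgs] : exists2 t, t \notin P & forall h, h \in gs -> t *: h = 0.
  apply: IH => h hgs.
  have [s' s'P [b bP s'h]] := gsP h (mem_behead (s := g :: gs) hgs).
  exists (u * s'); first exact: prime_idealMn.
  exists (fun k => b g * a k + u * b k).
    by move=> k /=; apply: (prime_idealD primeP); apply: (prime_idealMl primeP).
  rewrite -scalerA s'h big_cons scalerDr scalerA [u * _]mulrC -scalerA ug.
  rewrite !scaler_sumr -big_split /=; apply: eq_bigr => k _.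
  by rewrite !scalerA scalerDl.
exists (t * u); first exact: prime_idealMn.
move=> h; rewrite in_cons => /orP[/eqP->|hgs]; last first.
  by rewrite mulrC -scalerA tgs // scaler0.
rewrite -scalerA ug scaler_sumr big_seq big1 // => k kgs.
by rewrite scalerA mulrC -scalerA tgs ?scaler0.
Qed.

Section LocalizedQuotient.

Variable R : comNzRingType.
Implicit Types (P Q : {pred R}) (x : seq R).

Lemma loc_quot_nonzeroS (V : lmodType R) x P Q :
  {subset P <= Q} -> loc_quot_nonzero V x P -> loc_quot_nonzero V x Q.
Proof.
move=> PQ [m mP]; exists m => s sQ; apply: mP.
by apply/negP => /PQ; apply/negP.
Qed.

Lemma loc_quot_zero (V : lmodType R) x P :
  ~ loc_quot_nonzero V x P -> forall m : V, exists2 s, s \notin P & in_xF x (s *: m).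
Proof.
move=> zeroP m; apply: NNPP => mP; apply: zeroP; exists m => s sP smx.
by apply: mP; exists s.
Qed.

Lemma loc_quot_nonzero_sub (V : lmodType R) x P :
  loc_quot_nonzero V x P -> forall i : 'I_(size x), x`_i \in P.
Proof.
move=> [m mP] i; apply: NNPP => /negP xiP; apply: (mP _ xiP).
exists (fun j => if j == i then m else 0).
by rewrite (bigD1 i) //= eqxx big1 ?addr0 // => j /negbTE ->; rewrite scaler0.
Qed.

(* (V/xV)_P = 0 with x <= P means V_P = P V_P, so Nakayama applies. *)
Lemma loc_quot_zero_loc_zero (V : lmodType R) x P (gens : seq V) :
  is_prime_ideal P -> (forall i : 'I_(size x), x`_i \in P) ->
  (forall v, exists c : V -> R, v = \sum_(g <- gens) c g *: g) ->
  ~ loc_quot_nonzero V x P -> exists2 t, t \notin P & forall v : V, t *: v = 0.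
Proof.
move=> primeP xP genV zeroP.
have [C defC] := functional_choice _ genV.
have [t tP tgens] : exists2 t, t \notin P & forall g, g \in gens -> t *: g = 0.
  apply: (nakayama_prime_localization primeP) => g _.
  have [s sP [m defsg]] := loc_quot_zero zeroP g.
  exists s => //; exists (fun h => \sum_(i < size x) x`_i * C (m i) h).
    move=> h; apply: (prime_ideal_sum primeP) => i.
    by rewrite mulrC; apply: (prime_idealMl primeP).
  rewrite defsg
    (eq_bigr (fun i : 'I_(size x) => \sum_(h <- gens) (x`_i * C (m i) h) *: h)).
    by rewrite exchange_big /=; apply: eq_bigr => h _; rewrite scaler_suml.
  by move=> i _; rewrite {1}(defC (m i)) scaler_sumr; apply: eq_bigr => h _;
     rewrite scalerA.
exists t => // v; rewrite (defC v) scaler_sumr big_seq big1 // => g /tgens tg.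
by rewrite scalerA mulrC -scalerA tg scaler0.
Qed.

Variables (V1 V V2 : lmodType R) (f : {linear V1 -> V}) (g : {linear V -> V2}).
Hypothesis g_surj : forall w, exists v, g v = w.

Lemma loc_quot_nonzero_surj x P :
  loc_quot_nonzero V2 x P -> loc_quot_nonzero V x P.
Proof.
move=> [w wP]; have [m defw] := g_surj w; subst w.
exists m => s sP [n defsm]; apply: (wP s sP); exists (fun i => g (n i)).
by rewrite -linearZ defsm linear_sum; apply: eq_bigr => i _; rewrite linearZ_LR.
Qed.

Lemma loc_quot_nonzero_inj x P (gens : seq V) :
  is_prime_ideal P -> injective f ->
  (forall v, exists c : V -> R, v = \sum_(h <- gens) c h *: h) ->
  loc_quot_nonzero V1 x P -> loc_quot_nonzero V x P.
Proof.
move=> primeP f_inj genV nz1; have xP := loc_quot_nonzero_sub nz1.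
apply: NNPP => /(loc_quot_zero_loc_zero primeP xP genV) [t tP tV].
have [u uP] := nz1; apply: (uP t tP); exists (fun=> 0).
have -> : t *: u = 0 by apply: f_inj; rewrite linearZ_LR linear0 tV.
by rewrite big1 // => i _; rewrite scaler0.
Qed.

Hypothesis exact_fg : forall v, g v = 0 <-> exists u, f u = v.

(* If s g(m) = sum x_i g(n_i), then s m - sum x_i n_i = f(u), and a witness
   t u \in xV1 would give t s m \in xV. *)
Lemma loc_quot_nonzero_exact x P :
  is_prime_ideal P -> loc_quot_nonzero V x P ->
  loc_quot_nonzero V1 x P \/ loc_quot_nonzero V2 x P.
Proof.
move=> primeP [m mP].
have [nz2|zero2] := classic (loc_quot_nonzero V2 x P); [by right | left].
have [s sP [w defsgm]] := loc_quot_zero zero2 (g m).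
have [G GK] := functional_choice (fun w v => g v = w) g_surj.
have [u defu] : exists u, f u = s *: m - \sum_(i < size x) x`_i *: G (w i).
  apply: (exact_fg _).1; rewrite linearB linear_sum /= linearZ /= defsgm.
  by apply/eqP; rewrite subr_eq0; apply/eqP; apply: eq_bigr => i _; rewrite linearZ /= GK.
exists u => t tP [n defsu].
apply: (mP (t * s)); first exact: prime_idealMn.
exists (fun i => f (n i) + t *: G (w i)).
rewrite -scalerA -[s *: m](subrK (\sum_(i < size x) x`_i *: G (w i))) -defu.
rewrite scalerDr -linearZ defsu linear_sum scaler_sumr -big_split.
by apply: eq_bigr => i _ /=; rewrite linearZ /= scalerDr !scalerA mulrC.
Qed.

End LocalizedQuotient.

Lemma dim_le_subset (R : nzRingType) (X Y : {pred R} -> Prop) k :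
  dim_le Y k -> (forall P, X P -> Y P) -> dim_le X k.
Proof. by move=> dimY XY c cX; apply: dimY => i /cX /XY. Qed.

(* Y and Z need only be closed upwards inside X: a chain in X starting in Y
   stays in Y. *)
Lemma dim_le_union (R : nzRingType) (X Y Z : {pred R} -> Prop) k :
  dim_le Y k -> dim_le Z k ->
  (forall P, X P -> Y P \/ Z P) ->
  (forall P Q, X Q -> {subset P <= Q} -> Y P -> Y Q) ->
  (forall P Q, X Q -> {subset P <= Q} -> Z P -> Z Q) ->
  dim_le X k.
Proof.
move=> dimY dimZ XYZ Yup Zup c cX c_chain.
have chain_in (W : {pred R} -> Prop) :
    (forall P Q, X Q -> {subset P <= Q} -> W P -> W Q) ->
    W (c 0%N) -> forall i, (i <= k.+1)%N -> W (c i).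
  move=> Wup W0; elim=> // i IH ik; apply: (Wup (c i)); first exact: cX.
    by case: (c_chain i ik).
  exact/IH/ltnW.
case: (XYZ _ (cX 0%N isT)) => [/(chain_in _ Yup) cY | /(chain_in _ Zup) cZ].
  exact: dimY cY c_chain.
exact: dimZ cZ c_chain.
Qed.

Lemma supp_ppS (A : comNzRingType) (S : comAlgType A) (d : nat)
    (Sg : ndeg d -> {pred S}) (V W : lmodType S) x P Q :
  supp_pp Sg W x Q -> {subset P <= Q} -> supp_pp Sg V x P -> supp_pp Sg V x Q.
Proof. by move=> [primeQ SppQ _] PQ [_ _ /(loc_quot_nonzeroS PQ)]. Qed.

Theorem lemma3p4 (A : comNzRingType) (S : comAlgType A) (d : nat)
  (Sg : ndeg d -> {pred S})
  (M1 M M2 : lmodType S)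
  (M1g : ndeg d -> {pred M1}) (Mg : ndeg d -> {pred M}) (M2g : ndeg d -> {pred M2})
  (f : {linear M1 -> M}) (g : {linear M -> M2})
  (x : seq S) :
  artinian A -> local_infinite_residue A ->
  fg_standard_graded_algebra Sg ->
  fg_graded_module Sg M1g -> fg_graded_module Sg Mg -> fg_graded_module Sg M2g ->
  graded_map M1g Mg f -> graded_map Mg M2g g ->
  injective f -> (forall w : M2, exists v : M, g v = w) ->
  (forall v : M, g v = 0 <-> exists u : M1, f u = v) ->
  (forall s, s \in x -> exists i : 'I_d, s \in Sg (ndege i)) ->
  mm_system Sg M x <-> (mm_system Sg M1 x /\ mm_system Sg M2 x).
Proof.
move=> _ _ _ _ [_ _ [gens genM]] _ _ _ f_inj g_surj exact_fg _.
rewrite /mm_system; split=> [dimM | [dim1 dim2]].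
  split; apply: (dim_le_subset dimM) => P [homP SppP nzP]; split=> //.
    exact: (loc_quot_nonzero_inj homP.1 f_inj genM nzP).
  exact: (loc_quot_nonzero_surj g_surj nzP).
apply: (dim_le_union dim1 dim2) => [P [homP SppP nzP] | |]; try exact: supp_ppS.
by case: (loc_quot_nonzero_exact g_surj exact_fg homP.1 nzP); [left | right].
Qed.
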